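(* For all positive integers $m,n,a,b$ with $m<n$ and $a<b$, we have $\mathcal{F}(m,a,b,n)>\mathcal{F}(m,b,a,n)$.
   Context: $\mathcal{F}$ is defined on finite tuples of positive integers recursively: $\mathcal{F}(a)=1$ for every positive integer $a$; for $s\ge2$, $\mathcal{F}(a_1,\dots,a_s)=\sum_{i=1}^s\mathcal{F}(a_1,\dots,a_{i-1},a_i-1,a_{i+1},\dots,a_s)$, where a tuple with a zero entry is reduced by: $\mathcal{F}(0,a_2,\dots,a_t)=\mathcal{F}(a_2,\dots,a_t)$, $\mathcal{F}(a_1,\dots,a_t,0)=\mathcal{F}(a_1,\dots,a_t)$, and $\mathcal{F}(a_1,\dots,a_r,0,a_{r+2},\dots,a_s)=\mathcal{F}(a_1,\dots,a_{r-1},a_r+a_{r+2},a_{r+3},\dots,a_s)$. *)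

From mathcomp Require Import all_boot.
Set Implicit Arguments. Unset Strict Implicit. Unset Printing Implicit Defensive.

(* Decrease the i-th entry (0-indexed) of the tuple s by one, and apply the
   paper's reduction rule if that entry becomes 0:
   - a zero in first position is deleted,
   - a zero in last position is deleted,
   - a zero in an interior position r+1 is deleted and its two neighbours
     a_r, a_{r+2} are merged into a_r + a_{r+2}. *)
Definition Fstep (s : seq nat) (i : nat) : seq nat :=
  let a := nth 0 s i in
  if 1 < a then set_nth 0 s i a.-1
  else if i == 0 then behead s
  else if i == (size s).-1 then take i s
  else take i.-1 s ++ [:: nth 0 s i.-1 + nth 0 s i.+1] ++ drop i.+2 s.

(* Fuel-based recursion; each step decreases the sum of entries by one. *)
Fixpoint Ffuel (fuel : nat) (s : seq nat) : nat :=
  match fuel with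
  | 0 => 0
  | k.+1 =>
      if size s <= 1 then 1
      else sumn [seq Ffuel k (Fstep s i) | i <- iota 0 (size s)]
  end.

Definition F (s : seq nat) : nat := Ffuel (sumn s) s.

From mathcomp Require Import all_boot zify.

(* Expanding both sides by the defining recursion gives four terms each, which
   are compared termwise by induction on m + a + b + n. Lowering m, b or n
   yields the same comparison again, possibly degenerate (a = b, or m = n where
   reversal invariance of F gives equality), or for m = 1 its three-entry
   analogue F(b,a,n) <= F(a,b,n). The strict gain comes from lowering a: for
   a = 1 the terms are F(m, b+n) = C(m+b+n, m) and F(m+b, n) = C(m+b+n, n),
   and binomial coefficients increase towards the middle. *)

Lemma rev_set_nth (T : Type) (x0 : T) s i y : i < size s ->
  rev (set_nth x0 s i y) = set_nth x0 (rev s) (size s - i.+1) y.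
Proof.
move=> lt_i_s; have size_set : size (set_nth x0 s i y) = size s.
  by rewrite size_set_nth; lia.
apply: (@eq_from_nth _ x0) => [|k]; rewrite !size_rev size_set.
  by rewrite size_set_nth size_rev; lia.
move=> lt_k; rewrite nth_rev ?size_set // !nth_set_nth /= nth_rev //.
by case: eqP => [<-|]; case: eqP => //; lia.
Qed.

Lemma Fstep_rev s i : i < size s ->
  Fstep (rev s) i = rev (Fstep s (size s - i.+1)).
Proof.
move=> lt_i_s; rewrite /Fstep size_rev (nth_rev 0 lt_i_s).
case: (ltnP 1 (nth 0 s (size s - i.+1))) => _.
  by rewrite rev_set_nth; [congr set_nth; lia | lia].
case: (eqVneq i 0) => [-> | i_neq0].
  rewrite subn1 -drop1 drop_rev.
  case: eqVneq => [size_s_le1|_]; first by case: s lt_i_s size_s_le1 => [|x []].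
  by rewrite eqxx; congr (rev (take _ _)); lia.
case: (eqVneq i (size s).-1) => [i_last|i_int].
  have -> : size s - i.+1 = 0 by lia.
  by rewrite eqxx take_rev -drop1; congr (rev (drop _ _)); lia.
have [j_neq0 j_neq_last] : size s - i.+1 != 0 /\ size s - i.+1 != (size s).-1 by lia.
rewrite (negPf j_neq0) (negPf j_neq_last) !rev_cat take_rev drop_rev /=.
rewrite !nth_rev; try lia.
have -> : size s - i.-1 = (size s - i.+1).+2 by lia.
have -> : size s - i.-1.+1 = (size s - i.+1).+1 by lia.
have -> : size s - i.+2 = (size s - i.+1).-1 by lia.
by rewrite -catA addnC.
Qed.

Lemma sumn_iota_rev n (f : nat -> nat) :
  sumn [seq f (n - i.+1) | i <- iota 0 n] = sumn [seq f i | i <- iota 0 n].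
Proof.
have := big_nat_rev addn 0 0 n xpredT f; rewrite /index_iota subn0 add0n => rev_sum.
by rewrite !sumnE !big_map rev_sum.
Qed.

Lemma Ffuel_rev k s : Ffuel k (rev s) = Ffuel k s.
Proof.
elim: k s => [//|k IH] s /=; rewrite size_rev; case: ifP => // _.
rewrite -[in RHS]sumn_iota_rev; congr sumn; apply/eq_in_map => i.
by rewrite mem_iota => /andP[_ lt_i_s]; rewrite Fstep_rev // IH.
Qed.

Lemma F_rev s : F (rev s) = F s.
Proof. by rewrite /F sumn_rev Ffuel_rev. Qed.

Lemma FfuelE k s : sumn s = k -> Ffuel k s = F s.
Proof. by move=> <-. Qed.

Lemma F1E x : 0 < x -> F [:: x] = 1.
Proof. by case: x. Qed.

Lemma F2E x y : 0 < x -> 0 < y ->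
  F [:: x; y] = (if 1 < x then F [:: x.-1; y] else F [:: y])
              + (if 1 < y then F [:: x; y.-1] else F [:: x]).
Proof.
move=> x_gt0 y_gt0; rewrite {1}/F.
have -> : sumn [:: x; y] = (x + y).-1.+1 by rewrite /=; lia.
rewrite /= /Fstep /=.
by case: (ltnP 1 x) => ?; case: (ltnP 1 y) => ?; rewrite /= !FfuelE //=; lia.
Qed.

Lemma F3E x y z : 0 < x -> 0 < y -> 0 < z ->
  F [:: x; y; z] = (if 1 < x then F [:: x.-1; y; z] else F [:: y; z])
                 + (if 1 < y then F [:: x; y.-1; z] else F [:: x + z])
                 + (if 1 < z then F [:: x; y; z.-1] else F [:: x; y]).
Proof.
move=> x_gt0 y_gt0 z_gt0; rewrite {1}/F.
have -> : sumn [:: x; y; z] = (x + y + z).-1.+1 by rewrite /=; lia.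
rewrite /= /Fstep /=.
by case: (ltnP 1 x) => ?; case: (ltnP 1 y) => ?; case: (ltnP 1 z) => ?;
  rewrite /= !FfuelE //=; lia.
Qed.

Lemma F4E x y z w : 0 < x -> 0 < y -> 0 < z -> 0 < w ->
  F [:: x; y; z; w] = (if 1 < x then F [:: x.-1; y; z; w] else F [:: y; z; w])
                    + (if 1 < y then F [:: x; y.-1; z; w] else F [:: x + z; w])
                    + (if 1 < z then F [:: x; y; z.-1; w] else F [:: x; y + w])
                    + (if 1 < w then F [:: x; y; z; w.-1] else F [:: x; y; z]).
Proof.
move=> x_gt0 y_gt0 z_gt0 w_gt0; rewrite {1}/F.
have -> : sumn [:: x; y; z; w] = (x + y + z + w).-1.+1 by rewrite /=; lia.
rewrite /= /Fstep /=.
by case: (ltnP 1 x) => ?; case: (ltnP 1 y) => ?; case: (ltnP 1 z) => ?;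
  case: (ltnP 1 w) => ?; rewrite /= !FfuelE //=; lia.
Qed.

Lemma F2_bin x y : 0 < x -> 0 < y -> F [:: x; y] = 'C(x + y, x).
Proof.
elim: {x y}(x + y) {-2}x {-2}y (leqnn (x + y)) => [|k IH] [|x] [|y] //= le_xy_k _ _.
rewrite F2E //= addSn binS.
case: x le_xy_k => [|x]; case: y => [|y] le_xy_k /=.
- by rewrite !F1E.
- by rewrite F1E // IH // ?bin1 ?bin0; lia.
- by rewrite F1E // IH // (addn1 x.+1) binn; lia.
- by rewrite !IH ?addnS ?addSn //; lia.
Qed.

Lemma ltn_binS N k : k.*2.+1 < N -> 'C(N, k) < 'C(N, k.+1).
Proof.
move=> lt_2k_N; have Ck_gt0 : 0 < 'C(N, k) by rewrite bin_gt0; lia.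
rewrite -(ltn_pmul2l (ltn0Sn k)) mul_bin_left ltn_pmul2r //; lia.
Qed.

Lemma ltn_bin2r N k j : k < j -> j.*2 <= N -> 'C(N, k) < 'C(N, j).
Proof.
elim: j => [//|j IH] lt_k_j le_2j_N.
apply: (@leq_ltn_trans 'C(N, j)); last by apply: ltn_binS; lia.
have [lt_kj | le_jk] := ltnP k j; first by apply/ltnW/IH; lia.
by rewrite (_ : k = j) //; lia.
Qed.

Lemma ltn_bin_center N k j : k < j -> k < N - j -> 'C(N, k) < 'C(N, j).
Proof.
move=> lt_k_j lt_k_Nj; case: (leqP j.*2 N) => [le_2j_N | lt_N_2j].
  exact: ltn_bin2r.
rewrite -(bin_sub (_ : j <= N)); last lia.
apply: ltn_bin2r; lia.
Qed.

Lemma F2_shift_lt x y z : 0 < x -> 0 < y -> x < z ->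
  F [:: x; y + z] < F [:: x + y; z].
Proof.
move=> x_gt0 y_gt0 lt_x_z; rewrite !F2_bin ?addnA; try lia.
apply: ltn_bin_center; lia.
Qed.

Lemma F3_swap_le x y z : 0 < x -> 0 < y -> 0 < z -> x <= y ->
  F [:: y; x; z] <= F [:: x; y; z].
Proof.
elim: {x y z}(x + y + z) {-2}x {-2}y {-2}z (leqnn (x + y + z)) => [|k IH] x y z.
  lia.
move=> le_sum_k x_gt0 y_gt0 z_gt0; rewrite leq_eqVlt => /predU1P[-> // | lt_x_y].
rewrite F3E // [leqRHS]F3E // (_ : 1 < y); last lia.
rewrite [X in X + _ <= _]addnC; apply: leq_add; first apply: leq_add.
- case: (ltnP 1 x) => [x_gt1 | _]; first by apply: IH; lia.
  by rewrite F1E ?F2_bin ?bin_gt0 ?leq_addr //; lia.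
- by apply: IH; lia.
- case: (ltnP 1 z) => [z_gt1 | _]; first by apply: IH; lia.
  by rewrite -[[:: y; x]]/(rev [:: x; y]) F_rev.
Qed.

Section SwapInduction.

Variable k : nat.

Hypothesis F4_swap_lt_below : forall m n a b,
  m + a + b + n <= k -> 0 < m -> 0 < n -> 0 < a -> 0 < b -> m < n -> a < b ->
  F [:: m; b; a; n] < F [:: m; a; b; n].

Lemma F4_swap_le m n a b :
  m + a + b + n <= k -> 0 < m -> 0 < n -> 0 < a -> 0 < b -> m <= n -> a <= b ->
  F [:: m; b; a; n] <= F [:: m; a; b; n].
Proof.
move=> le_sum_k m_gt0 n_gt0 a_gt0 b_gt0.
rewrite leq_eqVlt => /predU1P[-> | lt_m_n].
  by rewrite -[[:: n; b; a; n]]/(rev [:: n; a; b; n]) F_rev.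
rewrite leq_eqVlt => /predU1P[-> // | lt_a_b].
exact/ltnW/F4_swap_lt_below.
Qed.

Lemma F4_swap_lt m n a b :
  m + a + b + n <= k.+1 -> 0 < m -> 0 < n -> 0 < a -> 0 < b -> m < n -> a < b ->
  F [:: m; b; a; n] < F [:: m; a; b; n].
Proof.
move=> le_sum_k m_gt0 n_gt0 a_gt0 b_gt0 lt_m_n lt_a_b.
have b_gt1 : 1 < b by lia.
have n_gt1 : 1 < n by lia.
rewrite F4E // [ltnRHS]F4E // b_gt1 n_gt1.
rewrite [X in X + _ < _]addnAC -!addSn addSnnS.
apply: leq_add; first apply: leq_add; first apply: leq_add.
- case: (ltnP 1 m) => [m_gt1 | _]; first by apply/ltnW/F4_swap_lt_below; lia.
  by apply: F3_swap_le; lia.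
- case: (ltnP 1 a) => [a_gt1 | _]; first by apply: F4_swap_lt_below; lia.
  by apply: F2_shift_lt; lia.
- by apply: F4_swap_le; lia.
- by apply: F4_swap_le; lia.
Qed.

End SwapInduction.

Theorem proposition6 (m n a b : nat) :
  0 < m -> 0 < n -> 0 < a -> 0 < b -> m < n -> a < b ->
  F [:: m; b; a; n] < F [:: m; a; b; n].
Proof.
elim: {m n a b}(m + a + b + n) {-2}m {-2}n {-2}a {-2}b (leqnn (m + a + b + n))
  => [|k IH] m n a b le_sum_k; first lia.
exact: F4_swap_lt IH m n a b le_sum_k.
Qed.
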